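(* Let $\mathcal{C}$ be a chordal $d$-uniform clutter on $[n]$ and let $\mathbf{e}$ and $\mathbf{e}'$ be two simplicial orders of $\mathcal{C}$. Then the simplicial multisets associated with $\mathbf{e}$ and $\mathbf{e}'$ coincide. In particular, all simplicial orders of $\mathcal{C}$ have the same length.
   Context: A $d$-uniform clutter $\mathcal{C}$ on $[n]$ is a set of $d$-element subsets of $[n]$. A $(d-1)$-subset $e$ is a submaximal circuit of $\mathcal{C}$ if $e\subset F$ for some $F\in\mathcal{C}$. A subset $V\subseteq[n]$ is a clique of $\mathcal{C}$ if every $d$-subset of $V$ belongs to $\mathcal{C}$. For a $(d-1)$-subset $e$, $\mathrm{N}_{\mathcal{C}}(e)=\{c\in[n]: e\cup\{c\}\in\mathcal{C}\}$ and $\mathrm{N}_{\mathcal{C}}[e]=e\cup\mathrm{N}_{\mathcal{C}}(e)$; $e$ is simplicial in $\mathcal{C}$ if it is a submaximal circuit and $\mathrm{N}_{\mathcal{C}}[e]$ is a clique. Deletion: $\mathcal{C}\setminus e=\{F\in\mathcal{C}: e\not\subset F\}$; $\mathcal{C}_{e_1\cdots e_i}$ denotes successive deletion of $e_1,\ldots,e_i$. A simplicial order of $\mathcal{C}$ is a sequence $e_1,\ldots,e_r$ with $e_1$ simplicial in $\mathcal{C}$, $e_i$ simplicial in $\mathcal{C}_{e_1\cdots e_{i-1}}$ for $i>1$, and $\mathcal{C}_{e_1\cdots e_r}=\emptyset$; $\mathcal{C}$ is chordal if it has a simplicial order. The simplicial multiset of the order is the multiset $\{N_1,\ldots,N_r\}$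 with $N_1=|\mathrm{N}_{\mathcal{C}}(e_1)|$, $N_i=|\mathrm{N}_{\mathcal{C}_{e_1\cdots e_{i-1}}}(e_i)|$ for $i>1$. *)

From mathcomp Require Import all_boot.
Set Implicit Arguments. Unset Strict Implicit. Unset Printing Implicit Defensive.

Section Clutter.
Variable n : nat.
Notation V := 'I_n.

Definition uniform_clutter (d : nat) (C : {set {set V}}) : Prop :=
  forall F, F \in C -> #|F| = d.

Definition submaximal (d : nat) (C : {set {set V}}) (e : {set V}) : bool :=
  (#|e| == d.-1) && [exists F in C, e \subset F].

Definition clique (d : nat) (C : {set {set V}}) (W : {set V}) : bool :=
  [forall S : {set V}, ((S \subset W) && (#|S| == d)) ==> (S \in C)].

Definition nbh (C : {set {set V}}) (e : {set V}) : {set V} :=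
  [set c | (c |: e) \in C].
Definition cnbh (C : {set {set V}}) (e : {set V}) : {set V} := e :|: nbh C e.

Definition simplicial (d : nat) (C : {set {set V}}) (e : {set V}) : bool :=
  submaximal d C e && clique d C (cnbh C e).

Definition del (C : {set {set V}}) (e : {set V}) : {set {set V}} :=
  [set F in C | ~~ (e \subset F)].

Fixpoint simplicial_order (d : nat) (C : {set {set V}}) (es : seq {set V}) : bool :=
  match es with
  | [::] => C == set0
  | e :: es' => simplicial d C e && simplicial_order d (del C e) es'
  end.

Definition chordal (d : nat) (C : {set {set V}}) : Prop :=
  exists es, simplicial_order d C es.

(* the simplicial multiset [N_1; ...; N_r] (as a list, compared up to perm_eq) *)
Fixpoint simplicial_multiset (C : {set {set V}}) (es : seq {set V}) : seq nat :=
  match es with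
  | [::] => [::]
  | e :: es' => #|nbh C e| :: simplicial_multiset (del C e) es'
  end.

End Clutter.

(** Count the cliques of size [d - 1 + i] (for [i >= 1]).  Deleting a
    simplicial circuit [e] destroys exactly the cliques containing [e]; these
    are the sets [e :|: S] with [S] an [i]-subset of the neighbourhood of [e],
    so the count drops by ['C(N, i)] with [N = #|nbh C e|].  Along a whole
    simplicial order the clutter ends empty, with no such cliques left, hence
    [\sum_j 'C(N_j, i)] equals the number of cliques of size [d - 1 + i] of
    [C] for every order.  These binomial moments, for all [i >= 1], determine
    a multiset of positive integers: its maximum [M] is the only element with
    ['C(M, M) <> 0] among the elements [<= M]. *)

From mathcomp Require Import all_boot zify.
Set Implicit Arguments. Unset Strict Implicit. Unset Printing Implicit Defensive.

Lemma cliqueP n d (C : {set {set 'I_n}}) (W : {set 'I_n}) :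
  reflect (forall S : {set 'I_n}, S \subset W -> #|S| = d -> S \in C) (clique d C W).
Proof.
apply: (iffP forallP) => [W_clique S sSW S_card | W_clique S].
  by have := W_clique S; rewrite sSW S_card eqxx.
by apply/implyP => /andP[sSW /eqP S_card]; apply: W_clique.
Qed.

Definition clique_count n d (C : {set {set 'I_n}}) k :=
  #|[set W : {set 'I_n} | #|W| == k & clique d C W]|.

Lemma uniform_del n d (C : {set {set 'I_n}}) e :
  uniform_clutter d C -> uniform_clutter d (del C e).
Proof. by move=> C_uniform F; rewrite inE => /andP[/C_uniform]. Qed.

Lemma clique_count0 n d k :
  0 < d -> d <= k -> clique_count d (set0 : {set {set 'I_n}}) k = 0.
Proof.
move=> d_gt0 d_le_k; apply/eqP; rewrite cards_eq0; apply/eqP/setP => W.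
rewrite !inE; apply/negP => /andP[/eqP W_card /cliqueP W_clique].
have : 0 < #|[set S : {set 'I_n} | S \subset W & #|S| == d]|.
  by rewrite cards_draws bin_gt0 W_card.
case/card_gt0P => S; rewrite inE => /andP[sSW /eqP S_card].
by have := W_clique S sSW S_card; rewrite inE.
Qed.

Section Circuit.
Variables (n d : nat) (C : {set {set 'I_n}}) (e : {set 'I_n}).
Hypotheses (d_gt0 : 0 < d) (C_uniform : uniform_clutter d C) (e_card : #|e| = d.-1).

Lemma card_setU1_circuit c : c \notin e -> #|c |: e| = d.
Proof. by move=> ce; rewrite cardsU1 ce e_card; lia. Qed.

Lemma nbh_circuit_disjoint : [disjoint nbh C e & e].
Proof.
rewrite disjoint_subset; apply/subsetP => c; rewrite !inE; apply: contraL => ce.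
by apply/negP => /C_uniform; rewrite (setUidPr _) ?sub1set // e_card; lia.
Qed.

Lemma nbh_circuit_gt0 : submaximal d C e -> 0 < #|nbh C e|.
Proof.
case/andP => _ /existsP[F /andP[FC eF]].
have : 0 < #|F :\: e| by rewrite cardsDS // (C_uniform FC) e_card; lia.
case/card_gt0P => c /setDP[cF ce]; apply/card_gt0P; exists c; rewrite inE.
suff -> : c |: e = F by [].
apply/eqP; rewrite eqEcard subUset sub1set cF eF (C_uniform FC).
by rewrite card_setU1_circuit // leqnn.
Qed.

Lemma clique_del (W : {set 'I_n}) :
  d <= #|W| -> clique d (del C e) W = clique d C W && ~~ (e \subset W).
Proof.
move=> d_le_W; apply/cliqueP/andP => [W_clique | [/cliqueP W_clique eW] S sSW S_card].
  split.
    apply/cliqueP => S sSW S_card.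
    by have := W_clique S sSW S_card; rewrite inE => /andP[].
  apply/negP => eW.
  have : 0 < #|W :\: e| by rewrite cardsDS // e_card; lia.
  case/card_gt0P => c /setDP[cW ce].
  suff : c |: e \in del C e by rewrite inE subsetUr andbF.
  by apply: W_clique; [rewrite subUset sub1set cW | exact: card_setU1_circuit].
rewrite inE W_clique //; apply: contra eW => eS; exact: subset_trans eS sSW.
Qed.

Lemma clique_supset (W : {set 'I_n}) : clique d C (cnbh C e) -> e \subset W ->
  clique d C W = (W :\: e \subset nbh C e).
Proof.
move=> /cliqueP nbh_clique eW; apply/cliqueP/idP => [W_clique | WeN S sSW S_card].
  apply/subsetP => c /setDP[cW ce]; rewrite inE; apply: W_clique.
    by rewrite subUset sub1set cW.
  exact: card_setU1_circuit.
apply: nbh_clique S_card; apply: subset_trans sSW _.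
by rewrite -(setID W e) (setIidPr eW) /cnbh setUS.
Qed.

End Circuit.

Lemma clique_count_del n d (C : {set {set 'I_n}}) e i :
  0 < d -> 0 < i -> uniform_clutter d C -> simplicial d C e ->
  clique_count d C (d.-1 + i) = 'C(#|nbh C e|, i) + clique_count d (del C e) (d.-1 + i).
Proof.
move=> d_gt0 i_gt0 C_uniform /andP[/andP[/eqP e_card _] e_clique].
have e_nbh := nbh_circuit_disjoint d_gt0 C_uniform e_card.
have setU_circuitK (S : {set 'I_n}) : S \subset nbh C e -> (e :|: S) :\: e = S.
  move=> sSN; rewrite setDUl setDv set0U; apply/setDidPl.
  exact: disjointWl sSN e_nbh.
set A := [set W : {set 'I_n} | #|W| == d.-1 + i & clique d C W].
set E := [set W : {set 'I_n} | e \subset W].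
set D := [set S : {set 'I_n} | S \subset nbh C e & #|S| == i].
have del_cliques : [set W : {set 'I_n} | #|W| == d.-1 + i & clique d (del C e) W] = A :\: E.
  apply/setP => W; rewrite !inE andbCA; case: eqP => //= W_card.
  by rewrite clique_del ?W_card 1?andbC //; lia.
have supset_cliques : A :&: E = setU e @: D.
  apply/setP => W; rewrite !inE; apply/andP/imsetP.
    case=> /andP[/eqP W_card W_clique] eW; exists (W :\: e).
      rewrite inE -(clique_supset d_gt0 e_card) // W_clique.
      by rewrite cardsDS // W_card e_card addKn eqxx.
    by rewrite -{1}(setID W e) (setIidPr eW).
  case=> S; rewrite inE => /andP[sSN /eqP S_card] ->.
  have eS : e :&: S = set0.
    by apply/disjoint_setI0; rewrite disjoint_sym (disjointWl sSN).
  rewrite cardsU eS cards0 subn0 e_card S_card eqxx subsetUl; split => //.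
  by rewrite (clique_supset d_gt0 e_card) ?subsetUl // setU_circuitK.
rewrite /clique_count del_cliques -(cardsID E A) supset_cliques.
rewrite card_in_imset ?cards_draws // => S1 S2.
rewrite !inE => /andP[sS1N _] /andP[sS2N _] eS12.
by rewrite -(setU_circuitK _ sS1N) -(setU_circuitK _ sS2N) eS12.
Qed.

Lemma binomial_sum_simplicial_multiset n d (C : {set {set 'I_n}}) es i :
  0 < d -> 0 < i -> uniform_clutter d C -> simplicial_order d C es ->
  \sum_(N <- simplicial_multiset C es) 'C(N, i) = clique_count d C (d.-1 + i).
Proof.
move=> d_gt0 i_gt0; elim: es C => [|e es IH] C C_uniform /=.
  by move/eqP => ->; rewrite big_nil clique_count0 //; lia.
case/andP => e_simplicial es_order.
rewrite big_cons IH //; last exact: uniform_del.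
by rewrite (clique_count_del d_gt0 i_gt0 C_uniform e_simplicial).
Qed.

Lemma simplicial_multiset_gt0 n d (C : {set {set 'I_n}}) es :
  0 < d -> uniform_clutter d C -> simplicial_order d C es ->
  0 \notin simplicial_multiset C es.
Proof.
move=> d_gt0; elim: es C => [|e es IH] C C_uniform //=.
case/andP => /andP[e_submax _] es_order; rewrite inE negb_or IH ?andbT //.
  case/andP: (e_submax) => /eqP e_card _.
  by rewrite eq_sym -lt0n (nbh_circuit_gt0 d_gt0 C_uniform e_card).
exact: uniform_del.
Qed.

Lemma size_simplicial_multiset n (C : {set {set 'I_n}}) es :
  size (simplicial_multiset C es) = size es.
Proof. by elim: es C => //= e es IH C; rewrite IH. Qed.

Lemma bigmax_seq_mem (s : seq nat) : 0 < \max_(x <- s) x -> \max_(x <- s) x \in s.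
Proof.
elim: s => [|a s IH]; first by rewrite big_nil.
rewrite big_cons inE; case: (leqP (\max_(x <- s) x) a) => _; first by rewrite eqxx.
by move/IH ->; rewrite orbT.
Qed.

Lemma mem_binomial_sum (s t : seq nat) M : M \in s -> {in t, forall x, x <= M} ->
  \sum_(x <- s) 'C(x, M) = \sum_(x <- t) 'C(x, M) -> M \in t.
Proof.
move=> Ms t_le_M; rewrite (big_rem _ Ms) binn; apply: contra_eqT => Mt.
rewrite [X in _ != X]big1_seq // => x /andP[_ xt]; apply: bin_small.
by rewrite ltn_neqAle t_le_M // andbT; apply: contraNneq Mt => <-.
Qed.

Lemma perm_eq_binomial_sums (s t : seq nat) : 0 \notin s -> 0 \notin t ->
  (forall i, 0 < i -> \sum_(x <- s) 'C(x, i) = \sum_(x <- t) 'C(x, i)) -> perm_eq s t.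
Proof.
have [m] := ubnP (size s + size t); elim: m s t => // m IH s t st_size s0 t0 sums.
have [st_nil | st_nonnil] := eqVneq (s ++ t) [::].
  by case: s t st_nil {st_size s0 t0 sums} => [|? ?] [|? ?].
have [x xst] : exists x, x \in s ++ t.
  by case: (s ++ t) st_nonnil => // x r _; exists x; exact: mem_head.
set M := \max_(x <- s ++ t) x.
have st_le_M y : y \in s ++ t -> y <= M by move=> yst; exact: leq_bigmax_seq.
have M_gt0 : 0 < M.
  apply: leq_trans (st_le_M x xst); rewrite lt0n; apply: contraTneq xst => ->.
  by rewrite mem_cat negb_or s0 t0.
have [Ms Mt] : M \in s /\ M \in t.
  have := bigmax_seq_mem M_gt0; rewrite mem_cat => /orP[Ms | Mt]; split => //.
    apply: (mem_binomial_sum Ms) (sums _ M_gt0) => y yt.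
    by rewrite st_le_M // mem_cat yt orbT.
  apply: (mem_binomial_sum Mt) (esym (sums _ M_gt0)) => y ys.
  by rewrite st_le_M // mem_cat ys.
rewrite (permPl (perm_to_rem Ms)) (permPr (perm_to_rem Mt)) perm_cons.
apply: IH.
- have s_gt0 : 0 < size s by case: (s) Ms.
  have t_gt0 : 0 < size t by case: (t) Mt.
  rewrite !size_rem //.
  by move: (size s) (size t) st_size s_gt0 t_gt0 => a b; lia.
- by apply: contra s0 => /mem_rem.
- by apply: contra t0 => /mem_rem.
move=> i /sums; rewrite (big_rem _ Ms) (big_rem _ Mt); exact: addnI.
Qed.

Theorem corollary2p2 (n d : nat) (C : {set {set 'I_n}}) (es es' : seq {set 'I_n}) :
  0 < d ->
  uniform_clutter d C ->
  chordal d C ->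
  simplicial_order d C es ->
  simplicial_order d C es' ->
  perm_eq (simplicial_multiset C es) (simplicial_multiset C es') /\
  size es = size es'.
Proof.
move=> d_gt0 C_uniform _ es_order es'_order.
have multisets_eq : perm_eq (simplicial_multiset C es) (simplicial_multiset C es').
  apply: perm_eq_binomial_sums => [||i i_gt0].
  - exact: simplicial_multiset_gt0 es_order.
  - exact: simplicial_multiset_gt0 es'_order.
  by rewrite !(binomial_sum_simplicial_multiset d_gt0 i_gt0 C_uniform).
split=> //.
rewrite -(size_simplicial_multiset C es) -(size_simplicial_multiset C es').
exact: perm_size multisets_eq.
Qed.
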